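(* Let $n\ge1$, $k\ge0$ be integers and define the $n\times n$ matrices $M_1(n,k)=\big(\mathcal P^+_{i+j+1}(k,0)\big)_{0\le i,j\le n-1}$ and $MP_1(n,k)=\big(\sum_{l\ge0}\mathcal P^+_{i+j+1}(k,l)\big)_{0\le i,j\le n-1}$. Then $$A(n)\cdot MP_1(n,k)=M_1(n,k)+C_1(n,k),$$ where $C_1(n,k)=(C_{i,j})_{0\le i,j\le n-1}$ has $C_{i,j}=0$ for $i\le n-2$ and $C_{n-1,j}=(xy)^{n-1}\sum_{l\ge0}\mathcal P_{j+1}(0,n-k+l)$.
   Context: Three-step paths consist of up-steps $(1,1)$, level steps $(1,0)$ and down-steps $(1,-1)$. Weights: $w((1,1))=1$, $w((1,0))=x+y$, $w((1,-1))=xy$; a path's weight is the product of its step weights. $\mathcal P_n(k,l)$ is the sum of weights of all three-step paths from $(0,k)$ to $(n,l)$; $\mathcal P^+_n(k,l)$ the same restricted to paths never running below the $x$-axis. The matrix $A(n)=(A_{n,i,j})_{0\le i,j\le n-1}$ is defined by $A_{n,i,j}=\frac{(1+x)(1+y)}{xy}$ if $i=j<n-1$; $-\frac1{xy}$ if $i=j-1<n-1$; $A_{n,n-1,n-1}=\frac{xy-(n-1)(x+y)}{xy}$; for $j<n-1$, $$A_{n,n-1,j}=\frac{(-1)^{n+j}}{xy}\sum_{l=j}^{n}\left(\binom lj\binom{n+j-1-l}{j}x^{l-j}y^{n-1-l}+\binom lj\binom{n+j-l}{j}x^{l-j}y^{n-l}\right);$$ and $0$ otherwise (binomial coefficients $\binom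 ab=0$ if $b<0$ or $a<b$). *)

(* x, y are taken as nonzero elements of an arbitrary field R
   (the paper's formal variables). *)
From HB Require Import structures.
From mathcomp Require Import all_boot all_order all_algebra.
Set Implicit Arguments. Unset Strict Implicit. Unset Printing Implicit Defensive.
Import Order.TTheory GRing.Theory Num.Theory.
Local Open Scope ring_scope.

Section Paths.
Variables (R : fieldType) (x y : R).

(* steps encoded by 'I_3 : 0 = down (1,-1), 1 = level (1,0), 2 = up (1,1) *)
Definition step (s : 'I_3) : int := (nat_of_ord s)%:Z - 1.
Definition stepw (s : 'I_3) : R :=
  if nat_of_ord s == 0%N then x * y else if nat_of_ord s == 1%N then x + y else 1.

Definition height (m : nat) (a : int) (t : {ffun 'I_m -> 'I_3}) (j : nat) : int :=
  a + \sum_(i < m | (i < j)%N) step (t i).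

Definition pathw (m : nat) (t : {ffun 'I_m -> 'I_3}) : R := \prod_(i < m) stepw (t i).

Definition Pw (m : nat) (a b : int) : R :=
  \sum_(t : {ffun 'I_m -> 'I_3} | height a t m == b) pathw t.

Definition Ppos (m : nat) (a b : int) : R :=
  \sum_(t : {ffun 'I_m -> 'I_3} |
          (height a t m == b) && [forall j : 'I_m.+1, (0 <= height a t j)%R]) pathw t.

(* \sum_{l >= 0} f m a (c + l), for f = Pw or Ppos. Paths of length m from a end
   at height <= a + m, so only l <= a - c + m contribute: the truncation below
   at l <= m + |a - c| is exact. *)
Definition sumPw (m : nat) (a c : int) : R :=
  \sum_(l < (m + `|a - c|).+1) Pw m a (c + l%:Z).
Definition sumPpos (m : nat) (a c : int) : R :=
  \sum_(l < (m + `|a - c|).+1) Ppos m a (c + l%:Z).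

Definition binz (a : int) (b : nat) : R :=
  match a with Posz a' => ('C(a', b))%:R | Negz _ => 0 end.

Definition Alast (n j : nat) : R :=
  (-1) ^+ (n + j) / (x * y) *
  \sum_(j <= l < n.+1)
     (binz l%:Z j * binz (n%:Z + j%:Z - 1 - l%:Z) j * x ^+ (l - j) * y ^ (n%:Z - 1 - l%:Z)
    + binz l%:Z j * binz (n%:Z + j%:Z - l%:Z) j * x ^+ (l - j) * y ^ (n%:Z - l%:Z)).

Definition Amx (n : nat) : 'M[R]_n :=
  \matrix_(i < n, j < n)
    if (i == j :> nat) && (i < n.-1)%N then (1 + x) * (1 + y) / (x * y)
    else if (i.+1 == j :> nat) && (i < n.-1)%N then - 1 / (x * y)
    else if (i == n.-1 :> nat) && (j == n.-1 :> nat) then (x * y - (n.-1)%:R * (x + y)) / (x * y)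
    else if (i == n.-1 :> nat) && (j < n.-1)%N then Alast n j
    else 0.

Definition M1 (n k : nat) : 'M[R]_n :=
  \matrix_(i < n, j < n) Ppos (i + j).+1 k%:Z 0.

Definition MP1 (n k : nat) : 'M[R]_n :=
  \matrix_(i < n, j < n) sumPpos (i + j).+1 k%:Z 0.

Definition C1 (n k : nat) : 'M[R]_n :=
  \matrix_(i < n, j < n)
    if (i < n.-1)%N then 0
    else (x * y) ^+ n.-1 * sumPw j.+1 0 (n%:Z - k%:Z).

End Paths.

(* Let W_t(a) be the total weight of nonnegative paths of length t from height a
   and T the first-step transfer operator, so that W_(t+1) = T W_t and
   P^+_(t+1)(., 0) = T P^+_t(., 0).  Column j of MP_1 is T^(j+1) applied to
   (W_0, ..., W_(n-1)), hence entry (i, j) of A(n) MP_1 is T^(j+1) applied to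
   sum_t A_(i,t) W_t.  For i < n-1 this combination is
   ((1+x)(1+y) W_i - W_(i+1)) / (xy) = P^+_i(., 0).  In the last row, xy A_(n-1,t)
   are the coefficients of the polynomials E_n(T) given by
   E_(n+2) = (T - x - y) E_(n+1) - xy E_n, and E_n(T) W_0 = (xy)^n [a >= n].  The
   indicator [a >= n] transferred j+1 <= n steps from a = k >= 0 never sees the
   floor, which turns it into the unrestricted sums of C_1. *)

From HB Require Import structures.
From mathcomp Require Import all_boot all_order all_algebra.
From mathcomp Require Import zify ring.
Set Implicit Arguments. Unset Strict Implicit. Unset Printing Implicit Defensive.
Import Order.TTheory GRing.Theory Num.Theory.
Local Open Scope ring_scope.

Section Transfer.
Variables (R : comRingType) (x y : R).

(* Splitting a path from height [a] after its first step; with [pos] the start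
   must not lie below the axis. *)
Definition transfer (pos : bool) (f : int -> R) (a : int) : R :=
  (pos ==> (0 <= a)%R)%:R * (f (a + 1) + (x + y) * f a + x * y * f (a - 1)).

Definition ge_ind (pos : bool) (c a : int) : R := ((pos ==> (0 <= a)%R) && (c <= a)%R)%:R.

Local Notation T := transfer.

(* Unlike [rewrite /transfer], this keeps partial applications [transfer pos]
   inside iterates folded. *)
Lemma transferE pos f a :
  T pos f a = (pos ==> (0 <= a)%R)%:R * (f (a + 1) + (x + y) * f a + x * y * f (a - 1)).
Proof. by []. Qed.

Lemma eq_transfer pos f g a :
  f (a + 1) = g (a + 1) -> f a = g a -> f (a - 1) = g (a - 1) -> T pos f a = T pos g a.
Proof. by rewrite /T => -> -> ->. Qed.

Lemma transferD pos f g a : T pos (fun b => f b + g b) a = T pos f a + T pos g a.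
Proof. by rewrite !transferE; ring. Qed.

Lemma transferZ pos c f a : T pos (fun b => c * f b) a = c * T pos f a.
Proof. by rewrite !transferE; ring. Qed.

Lemma transfer_sum pos N (F : 'I_N -> int -> R) a :
  T pos (fun b => \sum_(i < N) F i b) a = \sum_(i < N) T pos (F i) a.
Proof.
elim: N F => [|N IH] F; first by rewrite big_ord0 transferE !big_ord0 !mulr0 !addr0 mulr0.
by rewrite big_ord_recr /= -IH -transferD; apply: eq_transfer; rewrite big_ord_recr.
Qed.

Lemma eq_iter_transfer pos m f g a :
  f =1 g -> iter m (T pos) f a = iter m (T pos) g a.
Proof. by move=> fg; elim: m a => [|m IH] a //=; apply: eq_transfer. Qed.

Lemma iter_transfer_sum pos m N (c : 'I_N -> R) F a :
  iter m (T pos) (fun b => \sum_(i < N) c i * F i b) a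
  = \sum_(i < N) c i * iter m (T pos) (F i) a.
Proof.
elim: m a => [|m IH] a //=.
transitivity (T pos (fun b => \sum_(i < N) c i * iter m (T pos) (F i) b) a).
  by apply: eq_transfer; apply: IH.
by rewrite transfer_sum; apply: eq_bigr => i _; rewrite transferZ.
Qed.

Lemma iter_transfer_comb pos m c1 c2 f g a :
  iter m (T pos) (fun b => c1 * f b + c2 * g b) a
  = c1 * iter m (T pos) f a + c2 * iter m (T pos) g a.
Proof.
elim: m a => [|m IH] a //=.
transitivity (T pos (fun b => c1 * iter m (T pos) f b + c2 * iter m (T pos) g b) a).
  by apply: eq_transfer; apply: IH.
by rewrite transferD !transferZ.
Qed.

Lemma transfer_ge_ind pos c a : 0 <= c ->
  T pos (ge_ind pos c) a
  = ge_ind pos (c - 1) a + (x + y) * ge_ind pos c a + x * y * ge_ind pos (c + 1) a.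
Proof.
move=> c_ge0; rewrite /T /ge_ind.
have up : (c <= a + 1) = (c - 1 <= a) by apply/idP/idP; lia.
have down : (c <= a - 1) = (c + 1 <= a) by apply/idP/idP; lia.
case: pos => /=; last by rewrite mul1r up down.
have [a_ge0|a_lt0] := leP 0 a; last by rewrite /= !mul0r; ring.
have down_pos : (0 <= a - 1) && (c <= a - 1) = (c + 1 <= a) by apply/idP/idP; lia.
have up_pos : 0 <= a + 1 by lia.
by rewrite mul1r up down_pos up_pos.
Qed.

Lemma ge_ind_pos_clamp c a : c <= 0 -> ge_ind true c a = ge_ind true 0 a.
Proof.
move=> c_le; rewrite /ge_ind /=; case a_ge0 : (0 <= a) => //=.
by rewrite (le_trans c_le a_ge0).
Qed.

Lemma iter_transfer_free_vanish m c a :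
  a + m%:Z < c -> iter m (T false) (ge_ind false c) a = 0.
Proof.
elim: m a => [|m IH] a a_lt /=; first by rewrite /ge_ind (@lt_geF _ _ a c) ?andbF //; lia.
by rewrite transferE !IH; try lia; rewrite !mulr0 !addr0 mulr0.
Qed.

Lemma iter_transfer_pos_free m (n : nat) a : (m <= n)%N ->
  iter m (T true) (ge_ind true n%:Z) a = (0 <= a)%R%:R * iter m (T false) (ge_ind false n%:Z) a.
Proof.
elim: m a => [|m IH] a m_le /=.
  by rewrite /ge_ind implyTb implyFb; case: (0 <= a)%R; rewrite ?mul1r ?mul0r.
rewrite !transferE implyTb implyFb mul1r !IH; try lia.
have [a_ge0|a_lt0] := leP 0 a; last by rewrite !mul0r.
rewrite (_ : 0 <= a + 1); last by lia.
have [->|a_neq0] := eqVneq a 0.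
  (* after a step down to [-1], the remaining [m < n] steps cannot reach [n] *)
  by rewrite (iter_transfer_free_vanish (a := 0 - 1)); [rewrite /=; ring | lia].
by rewrite (_ : 0 <= a - 1); [rewrite /=; ring | lia].
Qed.

Lemma iter_transfer_free_shift m f s a :
  iter m (T false) f (a + s) = iter m (T false) (fun b => f (b + s)) a.
Proof.
elim: m a => [|m IH] a //=.
by rewrite !transferE (addrAC a s 1) (addrAC a s (-1)) !IH.
Qed.

End Transfer.

Section ConsFfun.
Variable T : finType.

Definition fcons m (s : T) (u : {ffun 'I_m -> T}) : {ffun 'I_m.+1 -> T} :=
  [ffun i => if unlift ord0 i is Some j then u j else s].

Lemma fcons0 m s (u : {ffun 'I_m -> T}) : fcons s u ord0 = s.
Proof. by rewrite ffunE unlift_none. Qed.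

Lemma fconsS m s (u : {ffun 'I_m -> T}) j : fcons s u (lift ord0 j) = u j.
Proof. by rewrite ffunE liftK. Qed.

Lemma sum_fcons (V : nmodType) m (F : {ffun 'I_m.+1 -> T} -> V) :
  \sum_t F t = \sum_(s : T) \sum_(u : {ffun 'I_m -> T}) F (fcons s u).
Proof.
rewrite pair_big /=.
pose ftl (t : {ffun 'I_m.+1 -> T}) : {ffun 'I_m -> T} := [ffun j => t (lift ord0 j)].
rewrite (reindex (fun p => fcons p.1 p.2)) //.
exists (fun t : {ffun 'I_m.+1 -> T} => (t ord0, ftl t)) => [[s u] _ | t _] /=.
  by rewrite fcons0; congr pair; apply/ffunP => j; rewrite ffunE fconsS.
by apply/ffunP => i; rewrite ffunE; case: unliftP => [j ->|->]; rewrite ?ffunE.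
Qed.

Lemma sum_ffun0 (V : nmodType) (F : {ffun 'I_0 -> T} -> V) c :
  (forall t, F t = c) -> \sum_t F t = c.
Proof.
by move=> Fc; rewrite (eq_bigr (fun _ => c)) ?sumr_const // card_ffun !card_ord expn0.
Qed.

End ConsFfun.

Section FirstStep.
Variables (R : fieldType) (x y : R).

Lemma sum_steps (F : int -> R -> R) :
  \sum_(s : 'I_3) F (step s) (stepw x y s) = F (-1) (x * y) + F 0 (x + y) + F 1 1.
Proof. by rewrite !big_ord_recl big_ord0 addr0 addrA. Qed.

Lemma height_fcons m a s (u : {ffun 'I_m -> 'I_3}) j :
  height a (fcons s u) j.+1 = height (a + step s) u j.
Proof.
rewrite /height [in LHS]big_mkcond big_ord_recl fcons0 [in RHS]big_mkcond -addrA.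
by congr (_ + (_ + _)); apply: eq_bigr => i _; rewrite lift0 ltnS fconsS.
Qed.

Lemma height0 m a (t : {ffun 'I_m -> 'I_3}) : height a t 0 = a.
Proof. by rewrite /height big_pred0 ?addr0. Qed.

Lemma pathw_fcons m s (u : {ffun 'I_m -> 'I_3}) :
  pathw x y (fcons s u) = stepw x y s * pathw x y u.
Proof.
by rewrite /pathw big_ord_recl fcons0; congr (_ * _); apply: eq_bigr => i _; rewrite fconsS.
Qed.

Lemma nonneg_fcons m a s (u : {ffun 'I_m -> 'I_3}) :
  [forall j : 'I_m.+2, 0 <= height a (fcons s u) j] =
  (0 <= a) && [forall j : 'I_m.+1, 0 <= height (a + step s) u j].
Proof.
apply/forallP/andP => [H | [Ha /forallP H] [[|j] Hj]]; rewrite ?height0 //.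
  split; first by have := H ord0; rewrite height0.
  by apply/forallP => j; have := H (lift ord0 j); rewrite lift0 height_fcons.
by rewrite height_fcons; apply: (H (Ordinal (Hj : (j < m.+1)%N))).
Qed.

Lemma Ppos_S m a b :
  Ppos x y m.+1 a b = transfer x y true (fun a' => Ppos x y m a' b) a.
Proof.
rewrite {1}/Ppos big_mkcond sum_fcons.
rewrite (eq_bigr (fun s => (0 <= a)%R%:R * (stepw x y s * Ppos x y m (a + step s) b))).
  rewrite (sum_steps (fun d c => (0 <= a)%R%:R * (c * Ppos x y m (a + d) b))).
  by rewrite /transfer addr0; ring.
move=> s _; rewrite /Ppos mulr_sumr [in RHS]big_mkcond mulr_sumr; apply: eq_bigr => u _.
rewrite height_fcons nonneg_fcons pathw_fcons.
by case: (0 <= a); rewrite ?mul1r ?mul0r ?andbF //; case: ifP; rewrite ?mulr0.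
Qed.

Lemma Pw_S m a b : Pw x y m.+1 a b = transfer x y false (fun a' => Pw x y m a' b) a.
Proof.
rewrite {1}/Pw big_mkcond sum_fcons.
rewrite (eq_bigr (fun s => stepw x y s * Pw x y m (a + step s) b)).
  by rewrite (sum_steps (fun d c => c * Pw x y m (a + d) b)) /transfer addr0 /=; ring.
move=> s _; rewrite /Pw mulr_sumr [in RHS]big_mkcond; apply: eq_bigr => u _.
by rewrite height_fcons pathw_fcons; case: ifP; rewrite ?mulr0.
Qed.

Lemma Ppos_0 a b : Ppos x y 0 a b = ((0 <= a)%R && (a == b))%:R.
Proof.
rewrite /Ppos big_mkcond; apply: sum_ffun0 => t.
rewrite height0 /pathw big_ord0 andbC.
have -> : [forall j : 'I_1, 0 <= height a t j] = (0 <= a).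
  by apply/forallP/idP => [/(_ ord0)|Ha [[|j] Hj]]; rewrite ?height0.
by case: ifP.
Qed.

Lemma Pw_0 a b : Pw x y 0 a b = (a == b)%:R.
Proof.
by rewrite /Pw big_mkcond; apply: sum_ffun0 => t; rewrite height0 /pathw big_ord0; case: ifP.
Qed.

End FirstStep.

Section PathIterates.
Variables (R : comRingType) (x y : R) (pos : bool) (paths : nat -> int -> int -> R).
Hypothesis paths_S :
  forall m a b, paths m.+1 a b = transfer x y pos (fun a' => paths m a' b) a.
Hypothesis paths_0 :
  forall a b, paths 0 a b = ((pos ==> (0 <= a)%R) && (a == b))%:R.

Lemma paths_iterD m i a b :
  paths (m + i) a b = iter m (transfer x y pos) (fun a' => paths i a' b) a.
Proof.
elim: m a => [|m IH] a //=.
by rewrite addSn paths_S; apply: eq_transfer; apply: IH.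
Qed.

Lemma sum_eq_shift L c a : a < c + L%:Z ->
  \sum_(l < L) (a == c + l%:Z)%:R = (c <= a)%R%:R :> R.
Proof.
elim: L => [|L IH] a_lt; first by rewrite big_ord0 lt_geF //; lia.
rewrite big_ord_recr /=.
have [a_lt'|a_ge] := ltP a (c + L%:Z).
  by rewrite IH // (_ : (a == c + L%:Z) = false) ?addr0 //; apply/negbTE/eqP; lia.
rewrite big1 => [|l _]; last by rewrite (_ : (a == _) = false) //; apply/negbTE/eqP; case: l => /= l; lia.
have a_eq : a == c + L%:Z by apply/eqP; lia.
have c_le : c <= a by lia.
by rewrite a_eq c_le add0r.
Qed.

Lemma sum_paths_ge m c L a : a + m%:Z < c + L%:Z ->
  \sum_(l < L) paths m a (c + l%:Z) = iter m (transfer x y pos) (ge_ind R pos c) a.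
Proof.
elim: m a => [|m IH] a a_lt /=.
  under eq_bigr => l _ do rewrite paths_0.
  rewrite /ge_ind; case: (pos ==> (0 <= a)%R) => /=; last by rewrite big1.
  by apply: sum_eq_shift; lia.
under eq_bigr => l _ do rewrite paths_S.
by rewrite -transfer_sum; apply: eq_transfer; apply: IH; lia.
Qed.

End PathIterates.

Lemma sumPpos_iter (R : fieldType) (x y : R) m a c :
  sumPpos x y m a c = iter m (transfer x y true) (ge_ind R true c) a.
Proof. by apply: sum_paths_ge; [exact: Ppos_S | exact: Ppos_0 | lia]. Qed.

Lemma sumPw_iter (R : fieldType) (x y : R) m a c :
  sumPw x y m a c = iter m (transfer x y false) (ge_ind R false c) a.
Proof. by apply: sum_paths_ge; [exact: Pw_S | exact: Pw_0 | lia]. Qed.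

Lemma iter_transfer_ge_sumPw (R : fieldType) (x y : R) j n (k : nat) : (j < n)%N ->
  iter j.+1 (transfer x y true) (ge_ind R true n%:Z) k%:Z = sumPw x y j.+1 0 (n%:Z - k%:Z).
Proof.
move=> j_lt; rewrite iter_transfer_pos_free // mul1r sumPw_iter -[k%:Z]add0r.
rewrite iter_transfer_free_shift; apply: eq_iter_transfer => b.
by rewrite /ge_ind /= (_ : (n%:Z <= b + k%:Z) = (n%:Z - (0 + k%:Z) <= b)) //; apply/idP/idP; lia.
Qed.


Section Convolution.
Variable R : comRingType.

Definition conv (f g : nat -> R) (d : nat) : R := \sum_(i < d.+1) f i * g (d - i)%N.

Definition zext (F : nat -> R) (d : int) : R := if d is Posz n then F n else 0.

(* The power series of [a'] is that of [a] divided by [1 - z X]. *)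
Definition geom_quot (z : R) (a a' : nat -> R) : Prop :=
  a' 0%N = a 0%N /\ forall i, a' i.+1 = a i.+1 + z * a' i.

Lemma conv0 f g : conv f g 0 = f 0%N * g 0%N.
Proof. by rewrite /conv big_ord1. Qed.

Lemma convC f g d : conv f g d = conv g f d.
Proof.
rewrite /conv (reindex_inj rev_ord_inj) /=; apply: eq_bigr => i _.
by rewrite subSS subKn 1?mulrC // -ltnS.
Qed.

Lemma conv_geom_quotS (z : R) (a a' h : nat -> R) : geom_quot z a a' ->
  forall d, conv a' h d.+1 = conv a h d.+1 + z * conv a' h d.
Proof.
move=> [a'0 a'S] d; rewrite /conv big_ord_recl [in X in _ = X + _]big_ord_recl a'0 -addrA.
congr (_ + _); rewrite mulr_sumr -big_split /=; apply: eq_bigr => i _.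
by rewrite /bump leq0n add1n subSS a'S mulrDl mulrA.
Qed.

Lemma conv_geom_quot2 (x y : R) (a a' b b' : nat -> R) :
  geom_quot x a a' -> geom_quot y b b' ->
  forall d : int, zext (conv a' b') d - (x + y) * zext (conv a' b') (d - 1)
                    + x * y * zext (conv a' b') (d - 2) = zext (conv a b) d.
Proof.
move=> qa qb; have [a'0 _] := qa; have [b'0 _] := qb.
have Sa := conv_geom_quotS b' qa.
have Sb d : conv a b' d.+1 = conv a b d.+1 + y * conv a b' d.
  by rewrite convC (conv_geom_quotS a qb) !(convC a).
have E0 : conv a' b' 0 = conv a b 0 by rewrite !conv0 a'0 b'0.
have Eb0 : conv a b' 0 = conv a b 0 by rewrite !conv0 b'0.
case=> [[|[|d]]|d] /=.
- by rewrite !mulr0 subr0 addr0 E0.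
- by rewrite subnn mulr0 addr0 Sa Sb E0 Eb0; ring.
- by rewrite add0n !subSS !subn0 !Sa Sb; ring.
- by rewrite !mulr0 subr0 addr0.
Qed.

End Convolution.

Section Coefficients.
Variables (R : comRingType) (x y : R).

(* Coefficients of [(1 - z X)^(-t-1)]. *)
Definition negbin (z : R) (t i : nat) : R := 'C(i + t, t)%:R * z ^+ i.

Definition negbin_pred (z : R) (t i : nat) : R :=
  if t is t'.+1 then negbin z t' i else (i == 0)%:R.

Lemma negbin_geom_quot z t : geom_quot z (negbin_pred z t) (negbin z t).
Proof.
rewrite /geom_quot /negbin_pred; case: t => [|t]; split => [|i]; rewrite /negbin.
- by rewrite bin0 expr0 mulr1.
- by rewrite !bin0 add0r exprS !mul1r.
- by rewrite !add0n !binn.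
- by rewrite addSn binS !addnS !addSn natrD exprS; ring.
Qed.

(* Coefficient of [X^d] in [((1 - x X)(1 - y X))^(-t-1)]. *)
Definition wcoef (d : int) (t : nat) : R := zext (conv (negbin x t) (negbin y t)) d.

Lemma wcoef_neg d t : d < 0 -> wcoef d t = 0.
Proof. by case: d. Qed.

Lemma wcoef0 t : wcoef 0 t = 1.
Proof. by rewrite /wcoef /= conv0 /negbin !add0n binn !mulr1. Qed.

Lemma wcoef1 t : wcoef 1 t = t.+1%:R * (x + y).
Proof.
rewrite /wcoef /= /conv !big_ord_recl big_ord0 /negbin /= addr0 /bump /= !add0n add1n.
by rewrite binn binSn !mulr1 !mul1r subn0; ring.
Qed.

Lemma wcoef_rec d t :
  wcoef d t - (x + y) * wcoef (d - 1) t + x * y * wcoef (d - 2) t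
  = if t is t'.+1 then wcoef d t' else (d == 0)%:R.
Proof.
rewrite /wcoef (conv_geom_quot2 (negbin_geom_quot x t) (negbin_geom_quot y t)) /negbin_pred.
case: t => [|t] //.
case: d => [d|d] //=.
rewrite /conv big_ord_recl big1 => [|i _]; last by rewrite /= mul0r.
by rewrite subn0 addr0 mul1r.
Qed.

Definition wpair (D : int) (t : nat) : R := wcoef (D - 1) t + wcoef D t.

Lemma wpair_rec D t :
  wpair D t - (x + y) * wpair (D - 1) t + x * y * wpair (D - 2) t
  = if t is t'.+1 then wpair D t' else ((D == 1) + (D == 0))%:R.
Proof.
have R1 := wcoef_rec (D - 1) t; have R0 := wcoef_rec D t.
have D11 : D - 1 - 1 = D - 2 by lia.
have D12 : D - 1 - 2 = D - 2 - 1 by lia.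
have D10 : (D - 1 == 0) = (D == 1) by apply/eqP/eqP; lia.
rewrite D11 D12 D10 in R1.
by rewrite /wpair D11 natrD; case: t R1 R0 => [|t] <- <-; ring.
Qed.

(* Coefficient of [T^t] in E_n(T). *)
Definition ecoef (n t : nat) : R := (-1) ^+ (n + t) * wpair (n%:Z - t%:Z) t.

Lemma ecoef_gt n t : (n < t)%N -> ecoef n t = 0.
Proof. by move=> n_lt; rewrite /ecoef /wpair !wcoef_neg ?addr0 ?mulr0 //; lia. Qed.

Lemma ecoef_diag n : ecoef n n = 1.
Proof.
rewrite /ecoef /wpair subrr wcoef_neg // add0r wcoef0 mulr1 addnn -mul2n exprM sqrrN.
by rewrite !expr1n.
Qed.

Lemma ecoef_subdiag n : ecoef n.+1 n = - 1 - n.+1%:R * (x + y).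
Proof.
rewrite /ecoef /wpair (_ : n.+1%:Z - n%:Z = 1); last by lia.
rewrite subrr wcoef0 wcoef1 addSn addnn exprS -mul2n exprM sqrrN !expr1n; ring.
Qed.

Lemma ecoef_rec m t :
  ecoef m.+2 t = (if t is t'.+1 then ecoef m.+1 t' else 0) - (x + y) * ecoef m.+1 t - x * y * ecoef m t.
Proof.
rewrite /ecoef; case: t => [|t].
  have := wpair_rec m.+2 0.
  have m1 : m.+2%:Z - 1 = m.+1%:Z by lia.
  have m2 : m.+2%:Z - 2 = m%:Z by lia.
  have n1 : (m.+2%:Z == 1) = false by apply/negbTE/eqP; lia.
  have n0 : (m.+2%:Z == 0) = false by apply/negbTE/eqP; lia.
  rewrite m1 m2 n1 n0 !subr0 !addn0 => /= rec.
  apply/eqP; rewrite -subr_eq0 !exprS; apply/eqP.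
  by transitivity ((-1) ^+ m * (wpair m.+2 0 - (x + y) * wpair m.+1 0 + x * y * wpair m 0));
    [ring | rewrite rec mulr0].
have := wpair_rec (m.+1%:Z - t%:Z) t.+1.
have s0 : m.+2%:Z - t.+1%:Z = m.+1%:Z - t%:Z by lia.
have s1 : m.+1%:Z - t.+1%:Z = m.+1%:Z - t%:Z - 1 by lia.
have s2 : m%:Z - t.+1%:Z = m.+1%:Z - t%:Z - 2 by lia.
by rewrite s0 s1 s2 => <-; rewrite !addnS !addSn !exprS; ring.
Qed.

End Coefficients.

Section LastRowCoefficients.
Variables (R : fieldType) (x y : R).

Lemma binz_sum M j L : (j <= M)%N -> (M < L)%N ->
  \sum_(j <= l < L) binz R l%:Z j * binz R (M%:Z + j%:Z - l%:Z) j
                      * x ^+ (l - j) * y ^ (M%:Z - l%:Z)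
  = wcoef x y (M%:Z - j%:Z) j.
Proof.
move=> j_le M_lt.
rewrite (big_cat_nat _ (n := M.+1)) //=; last exact: leqW.
rewrite [X in _ + X]big1_seq ?addr0; last first.
  move=> l /andP[_]; rewrite mem_index_iota => /andP[M_lt_l _]; rewrite /binz.
  case dE: (M%:Z + j%:Z - l%:Z) => [d|d]; last by rewrite mulr0 !mul0r.
  by rewrite (@bin_small d j) ?mulr0 ?mul0r //; lia.
have -> : M%:Z - j%:Z = Posz (M - j) by lia.
rewrite -[X in \sum_(X <= _ < _) _](add0n j) big_addn big_mkord subSn //.
rewrite /wcoef /= /conv; apply: eq_bigr => i _.
have i_lt := ltn_ord i.
have -> : M%:Z + j%:Z - (i + j)%N%:Z = Posz (M - i) by lia.
have -> : M%:Z - (i + j)%N%:Z = Posz (M - j - i) by lia.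
rewrite addnK /negbin (_ : (M - j - i + j = M - i)%N); last by lia.
by rewrite -exprnP; ring.
Qed.

Lemma xy_Alast n j : x != 0 -> y != 0 -> (j < n)%N -> x * y * Alast x y n j = ecoef x y n j.
Proof.
move=> x0 y0; case: n => [|m] // j_lt.
have shift l : m.+1%:Z + j%:Z - 1 - l%:Z = m%:Z + j%:Z - l%:Z by lia.
have shift' l : m.+1%:Z - 1 - l%:Z = m%:Z - l%:Z by lia.
rewrite /Alast big_split /=.
under eq_bigr => l _ do rewrite shift shift'.
rewrite !binz_sum //; try lia.
rewrite /ecoef /wpair (_ : m.+1%:Z - j%:Z - 1 = m%:Z - j%:Z); last by lia.
by field; rewrite x0 y0.
Qed.

End LastRowCoefficients.

Section ColumnRecurrence.
Variables (R : comRingType) (x y : R).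

(* [Wpos t a = sumPpos x y t a 0] by [sumPpos_iter]. *)
Definition Wpos (t : nat) (a : int) : R := iter t (transfer x y true) (ge_ind R true 0) a.

Lemma WposS t a : Wpos t.+1 a = transfer x y true (Wpos t) a.
Proof. by []. Qed.

Definition Wcomb (n : nat) (a : int) : R := \sum_(t < n.+1) ecoef x y n t * Wpos t a.

Lemma Wcomb_widen n N a : (n < N)%N -> Wcomb n a = \sum_(t < N) ecoef x y n t * Wpos t a.
Proof.
move=> n_lt; rewrite /Wcomb (big_ord_widen N (fun t => ecoef x y n t * Wpos t a) n_lt).
rewrite big_mkcond; apply: eq_bigr => t _; case: ltnP => // t_gt.
by rewrite ecoef_gt ?mul0r.
Qed.

Lemma Wcomb_rec n a :
  Wcomb n.+2 a = transfer x y true (Wcomb n.+1) a - (x + y) * Wcomb n.+1 a - x * y * Wcomb n a.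
Proof.
have n_lt : (n < n.+3)%N by lia.
rewrite (@Wcomb_widen n.+1 n.+3) // (@Wcomb_widen n n.+3) // /Wcomb.
under eq_bigr => t _ do rewrite ecoef_rec !mulrBl.
rewrite !big_split /= !sumrN big_ord_recl /= mul0r add0r !mulr_sumr.
congr (_ - _ - _); last by apply: eq_bigr => t _; rewrite mulrA.
  by rewrite transfer_sum; apply: eq_bigr => t _; rewrite transferZ add0n.
by apply: eq_bigr => t _; rewrite mulrA.
Qed.

Lemma WcombE n a : Wcomb n a = (x * y) ^+ n * ge_ind R true n a.
Proof.
suff both : forall a, Wcomb n a = (x * y) ^+ n * ge_ind R true n a
               /\ Wcomb n.+1 a = (x * y) ^+ n.+1 * ge_ind R true n.+1 a by case: (both a).
elim: n => [|n IH] {}a.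
  rewrite /Wcomb !big_ord_recr !big_ord0 /= !add0r ecoef_subdiag !ecoef_diag /Wpos /=.
  rewrite transfer_ge_ind // (@ge_ind_pos_clamp _ (0 - 1)) // add0r expr0 expr1.
  by split; ring.
split; first by case: (IH a).
rewrite Wcomb_rec (IH a).2 (IH a).1.
have -> : transfer x y true (Wcomb n.+1) a
          = transfer x y true (fun b => (x * y) ^+ n.+1 * ge_ind R true n.+1 b) a.
  by apply: eq_transfer; apply: (IH _).2.
have lo : n.+1%:Z - 1 = n%:Z by lia.
have hi : n.+1%:Z + 1 = n.+2%:Z by lia.
by rewrite transferZ transfer_ge_ind // lo hi !exprS; ring.
Qed.

End ColumnRecurrence.

Section Rows.
Variables (R : fieldType) (x y : R).
Hypotheses (x0 : x != 0) (y0 : y != 0).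

Lemma Wpos_Ppos i a :
  (1 + x) * (1 + y) * Wpos x y i a - Wpos x y i.+1 a = x * y * Ppos x y i a 0.
Proof.
elim: i a => [|i IH] a.
  rewrite /Wpos /= transfer_ge_ind // (@ge_ind_pos_clamp _ (0 - 1)) // add0r Ppos_0.
  rewrite /ge_ind /=; case: (leP 0 a) => a_ge0 /=; last by ring.
  have [->|a_ne0] := eqVneq a 0; first by rewrite /=; ring.
  by rewrite (_ : 1 <= a); [rewrite /=; ring | lia].
rewrite Ppos_S.
transitivity
  (transfer x y true (fun b => (1 + x) * (1 + y) * Wpos x y i b + (-1) * Wpos x y i.+1 b) a).
  by rewrite transferD !transferZ -!WposS; ring.
by rewrite -transferZ; apply: eq_transfer; rewrite -IH; ring.
Qed.

Lemma Amx_upper n (i t : 'I_n) : (i < n.-1)%N ->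
  Amx x y n i t = if t == i :> nat then (1 + x) * (1 + y) / (x * y)
                  else if t == i.+1 :> nat then - 1 / (x * y) else 0.
Proof.
move=> i_lt; have i_ne : (i == n.-1 :> nat) = false by rewrite ltn_eqF.
by rewrite mxE i_lt !andbT i_ne !andFb [i == t :> nat]eq_sym [i.+1 == t :> nat]eq_sym.
Qed.

Lemma Amx_row_sum n (i : 'I_n) a : (i < n.-1)%N ->
  \sum_(t < n) Amx x y n i t * Wpos x y t a = Ppos x y i a 0.
Proof.
move=> i_lt; have i1_lt : (i.+1 < n)%N by lia.
rewrite (bigD1 i) // (bigD1 (Ordinal i1_lt)); last by apply/eqP => /(congr1 val) /esym /n_Sn.
rewrite big1 => [|t /andP[t_ne_i t_ne_i1]]; last first.
  rewrite Amx_upper //; have /negbTE -> : (t : nat) != i := t_ne_i.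
  by have /negbTE -> : (t : nat) != i.+1 := t_ne_i1; rewrite mul0r.
rewrite !Amx_upper // eqxx (_ : i.+1 == i = false) ?eqxx; last by rewrite gtn_eqF.
apply: (mulfI (mulf_neq0 x0 y0)); rewrite /= -WposS -Wpos_Ppos addr0; field.
by rewrite x0 y0.
Qed.

Lemma Amx_last m (t : 'I_m.+1) :
  Amx x y m.+1 ord_max t
  = if t == m :> nat then (x * y - m%:R * (x + y)) / (x * y) else Alast x y m.+1 t.
Proof.
rewrite mxE /= ltnn !andbF eqxx /=.
by case: ltngtP => // m_lt; have := ltn_ord t; lia.
Qed.

Lemma Amx_last_row_sum m a :
  \sum_(t < m.+1) Amx x y m.+1 ord_max t * Wpos x y t a
  = Ppos x y m a 0 + (x * y) ^+ m * ge_ind R true m.+1 a.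
Proof.
have xy0 : x * y != 0 by rewrite mulf_neq0.
apply: (mulfI xy0); rewrite mulr_sumr big_ord_recr /= Amx_last eqxx.
have := WcombE x y m.+1 a; rewrite /Wcomb !big_ord_recr /= ecoef_diag ecoef_subdiag -WposS => eW.
have -> : \sum_(t < m) x * y * (Amx x y m.+1 ord_max (widen_ord (leqnSn m) t) * Wpos x y t a)
          = \sum_(t < m) ecoef x y m.+1 t * Wpos x y t a.
  apply: eq_bigr => t _; have t_lt := ltn_ord t.
  by rewrite Amx_last /= ltn_eqF // mulrA xy_Alast //; lia.
have -> : \sum_(t < m) ecoef x y m.+1 t * Wpos x y t a = (x * y) ^+ m.+1 * ge_ind R true m.+1 a
            - (-1 - m.+1%:R * (x + y)) * Wpos x y m a - Wpos x y m.+1 a by rewrite -eW; ring.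
rewrite [x * y * (_ + _)]mulrDr -Wpos_Ppos exprS; field.
by rewrite x0 y0.
Qed.

End Rows.

Theorem lemma12 (R : fieldType) (x y : R) (n k : nat) :
  x != 0 -> y != 0 -> (1 <= n)%N ->
  Amx x y n *m MP1 x y n k = M1 x y n k + C1 x y n k.
Proof.
move=> x0 y0; case: n => [|m] // _; apply/matrixP => i j.
rewrite [LHS]mxE [RHS]mxE [M1 _ _ _ _ _ _]mxE [C1 _ _ _ _ _ _]mxE.
have MP1_col t : MP1 x y m.+1 k t j = iter j.+1 (transfer x y true) (Wpos x y t) k%:Z.
  by rewrite mxE sumPpos_iter /Wpos -iterD addSn addnC.
have Ppos_iter t : iter j.+1 (transfer x y true) (fun b => Ppos x y t b 0) k%:Z
                   = Ppos x y (t + j).+1 k%:Z 0.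
  by rewrite -(paths_iterD (Ppos_S x y)) addSn addnC.
under eq_bigr => t _ do rewrite MP1_col.
rewrite -iter_transfer_sum.
have [i_lt|i_ge] := ltnP i m.
  rewrite (eq_iter_transfer _ _ _ _ _ (fun b => Amx_row_sum x0 y0 b i_lt)) Ppos_iter.
  by rewrite addr0.
have -> : i = ord_max by apply: val_inj => /=; have := ltn_ord i; lia.
have last_row b : \sum_(t < m.+1) Amx x y m.+1 ord_max t * Wpos x y t b
                  = 1 * Ppos x y m b 0 + (x * y) ^+ m * ge_ind R true m.+1 b.
  by rewrite (Amx_last_row_sum x0 y0) mul1r.
rewrite (eq_iter_transfer _ _ _ _ _ last_row) iter_transfer_comb mul1r Ppos_iter.
by rewrite iter_transfer_ge_sumPw.
Qed.
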